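(* Let $N\ge1$, $k\in\mathbb{Z}$, and let $\psi$ be a Dirichlet character modulo $N$ with $\psi(-1)=(-1)^k$, induced by a primitive character of conductor $N^*\mid N$. Then the number of $\Gamma_0(N)$-inequivalent cusps of $\Gamma_0(N)$ that are singular for $\psi$ equals \[ \sum_{\substack{f\mid N\\ (f,N/f)\mid \frac{N}{N^*}}}\varphi\big((f,N/f)\big). \]
   Context: For $\gamma=\begin{pmatrix}a&b\\c&d\end{pmatrix}\in\Gamma_0(N)$ write $\psi(\gamma)=\psi(d)$. For a cusp $\mathfrak{a}$ of $\Gamma_0(N)$ with stabilizer $\Gamma_{\mathfrak a}$, choose $\sigma_{\mathfrak a}\in SL_2(\mathbb{R})$ with $\sigma_{\mathfrak a}\infty=\mathfrak a$ and $\sigma_{\mathfrak a}^{-1}\Gamma_{\mathfrak a}\sigma_{\mathfrak a}=\{\pm\begin{pmatrix}1&n\\0&1\end{pmatrix}\}$, and let $\tau_{\mathfrak a}=\sigma_{\mathfrak a}\begin{pmatrix}1&1\\0&1\end{pmatrix}\sigma_{\mathfrak a}^{-1}$. The cusp $\mathfrak a$ is singular for $\psi$ if $\psi(\tau_{\mathfrak a})=1$ (this depends only on the $\Gamma_0(N)$-class of $\mathfrak a$). $\varphi$ is Euler's function. *)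

From HB Require Import structures.
From mathcomp Require Import all_boot all_order all_algebra all_field.
From mathcomp Require Import Rstruct.

Set Implicit Arguments. Unset Strict Implicit. Unset Printing Implicit Defensive.
Import Order.TTheory GRing.Theory Num.Theory.
Local Open Scope ring_scope.

Definition dirichlet_char (M : nat) (chi : int -> algC) : Prop :=
  [/\ forall n : int, chi (n + M%:Z) = chi n,
      forall m n : int, chi (m * n) = chi m * chi n,
      chi 1 = 1 &
      forall n : int, (chi n == 0) = ~~ coprimez n M%:Z].

(** primitive: no proper divisor d of M is an induced modulus. *)
Definition primitive_char (M : nat) (chi : int -> algC) : Prop :=
  dirichlet_char M chi /\
  forall d : nat, (d %| M)%N -> (d < M)%N ->
    exists n : int, [/\ (d%:Z %| n - 1)%Z, coprimez n M%:Z & chi n != 1].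

Definition induced_by (N : nat) (psi : int -> algC) (Nstar : nat)
  (chi : int -> algC) : Prop :=
  forall n : int, psi n = if coprimez n N%:Z then chi n else 0.

Definition i0 : 'I_2 := ord0.
Definition i1 : 'I_2 := ord_max.

Definition Gamma0 (N : nat) (g : 'M[int]_2) : Prop :=
  \det g = 1 /\ (N%:Z %| g i1 i0)%Z.

Definition psi_mx (psi : int -> algC) (g : 'M[int]_2) : algC := psi (g i1 i1).

(** Cusps: points of P^1(Q) = Q u {oo}; None stands for oo. *)
Definition cusp := option rat.

Definition act (g : 'M[int]_2) (x : cusp) : cusp :=
  let a := (g i0 i0)%:~R : rat in let b := (g i0 i1)%:~R : rat in
  let c := (g i1 i0)%:~R : rat in let d := (g i1 i1)%:~R : rat in
  match x with
  | None => if c == 0 then None else Some (a / c)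
  | Some q => if c * q + d == 0 then None else Some ((a * q + b) / (c * q + d))
  end.

Definition cusp_equiv (N : nat) (x y : cusp) : Prop :=
  exists g, Gamma0 N g /\ act g x = y.

Definition stab (N : nat) (x : cusp) (g : 'M[int]_2) : Prop :=
  Gamma0 N g /\ act g x = x.

Definition SL2R (s : 'M[Rdefinitions.R]_2) : Prop := \det s = 1.

Definition act_inf_R (s : 'M[Rdefinitions.R]_2) : option Rdefinitions.R :=
  if s i1 i0 == 0 then None else Some (s i0 i0 / s i1 i0).

Definition cuspR (x : cusp) : option Rdefinitions.R := omap (fun q : rat => ratr q) x.

Definition mxR (g : 'M[int]_2) : 'M[Rdefinitions.R]_2 := map_mx (fun z : int => z%:~R) g.

Definition mk2 (a b c d : Rdefinitions.R) : 'M[Rdefinitions.R]_2 :=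
  \matrix_(i < 2, j < 2)
     if (i : nat) == 0%N then (if (j : nat) == 0%N then a else b)
     else (if (j : nat) == 0%N then c else d).

Definition transl (n : int) : 'M[Rdefinitions.R]_2 := mk2 1 n%:~R 0 1.

Definition scaling (N : nat) (x : cusp) (s : 'M[Rdefinitions.R]_2) : Prop :=
  [/\ SL2R s, act_inf_R s = cuspR x,
      (forall g, stab N x g ->
         exists (n : int) (e : bool),
           invmx s *m mxR g *m s = (-1) ^+ e *: transl n) &
      (forall (n : int) (e : bool), exists g, stab N x g /\
           invmx s *m mxR g *m s = (-1) ^+ e *: transl n)].

Definition singular (N : nat) (psi : int -> algC) (x : cusp) : Prop :=
  exists s, scaling N x s /\
    exists g, [/\ stab N x g, mxR g = s *m transl 1 *m invmx s & psi_mx psi g = 1].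

(** A cusp a/c of Gamma_0(N), with a and c coprime, is classified up to equivalence by
    d = gcd(c, N) and the unit a (c/d) modulo g = gcd(d, N/d): both are invariant under
    Gamma_0(N), and a/c is equivalent to A/d for any A coprime to d with A = a (c/d) mod g.
    So each divisor d of N carries phi(g) classes.

    The stabiliser of a/c consists of the matrices +-(1 + t [-ac, a^2; -c^2, ac]) with
    N | t c^2, i.e. with w | t for the width w = N/(d g); after conjugation by a scaling
    matrix, tau is the one with t = w, so a/c is singular iff psi(1 + w a c) = 1.  Put
    K = d w, so that w a c = K (a c/d), N | K^2 and N | K g.  Then t |-> chi(1 + K t) is a
    character of Z, trivial on g Z, and a c/d is prime to g; hence psi(1 + w a c) = 1 iff
    this character is trivial, iff N* | K by primitivity of chi, iff g | N/N*. *)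

From HB Require Import structures.
From mathcomp Require Import all_boot all_order all_algebra all_field.
From mathcomp Require Import Rstruct.
From mathcomp Require Import ring lra zify.
Import Order.TTheory GRing.Theory Num.Theory.
Local Open Scope ring_scope.
Set Implicit Arguments. Unset Strict Implicit.

Local Notation RR := Rdefinitions.R.

Section LinearCombination.
Variable R : comPzRingType.

Lemma eq_lincomb1 (x y p q k : R) : p = q -> x - y = k * (p - q) -> x = y.
Proof. by move=> -> /eqP; rewrite subrr mulr0 subr_eq0 => /eqP. Qed.

Lemma eq_lincomb2 (x y p q r s k1 k2 : R) : p = q -> r = s ->
  x - y = k1 * (p - q) + k2 * (r - s) -> x = y.
Proof. by move=> -> -> /eqP; rewrite !subrr !mulr0 addr0 subr_eq0 => /eqP. Qed.

Lemma eq_lincomb3 (x y p q r s t v k1 k2 k3 : R) : p = q -> r = s -> t = v ->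
  x - y = k1 * (p - q) + k2 * (r - s) + k3 * (t - v) -> x = y.
Proof. by move=> -> -> -> /eqP; rewrite !subrr !mulr0 !addr0 subr_eq0 => /eqP. Qed.

End LinearCombination.

(** * 2x2 matrices *)

Definition mx2 {R : Type} (a b c d : R) : 'M[R]_2 :=
  \matrix_(i < 2, j < 2)
     if (i : nat) == 0%N then (if (j : nat) == 0%N then a else b)
     else (if (j : nat) == 0%N then c else d).

Section Mx2.
Variable R : Type.
Implicit Types (a b c d : R) (A : 'M[R]_2).

Lemma mx2_00 a b c d : mx2 a b c d i0 i0 = a. Proof. by rewrite mxE. Qed.
Lemma mx2_01 a b c d : mx2 a b c d i0 i1 = b. Proof. by rewrite mxE. Qed.
Lemma mx2_10 a b c d : mx2 a b c d i1 i0 = c. Proof. by rewrite mxE. Qed.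
Lemma mx2_11 a b c d : mx2 a b c d i1 i1 = d. Proof. by rewrite mxE. Qed.

Lemma mx2_eta A : A = mx2 (A i0 i0) (A i0 i1) (A i1 i0) (A i1 i1).
Proof.
apply/matrixP => i j; rewrite mxE.
by case: i => [[|[|i]] i_lt] //; case: j => [[|[|j]] j_lt] //=; congr (A _ _); apply: val_inj.
Qed.

Lemma mx2_inj a b c d a' b' c' d' :
  mx2 a b c d = mx2 a' b' c' d' -> [/\ a = a', b = b', c = c' & d = d'].
Proof.
move=> E; split; [move: (congr1 (fun A => A i0 i0) E) | move: (congr1 (fun A => A i0 i1) E)
  | move: (congr1 (fun A => A i1 i0) E) | move: (congr1 (fun A => A i1 i1) E)];
  by rewrite /= ?mx2_00 ?mx2_01 ?mx2_10 ?mx2_11.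
Qed.

Lemma map_mx2 (S : Type) (f : R -> S) a b c d :
  map_mx f (mx2 a b c d) = mx2 (f a) (f b) (f c) (f d).
Proof. by apply/matrixP => i j; rewrite !mxE; case: ifP; case: ifP. Qed.

End Mx2.

Lemma mk2E (a b c d : Rdefinitions.R) : mk2 a b c d = mx2 a b c d.
Proof. by []. Qed.

Lemma add_mx2 (R : nmodType) (a b c d a' b' c' d' : R) :
  mx2 a b c d + mx2 a' b' c' d' = mx2 (a + a') (b + b') (c + c') (d + d').
Proof. by apply/matrixP => i j; rewrite !mxE; case: ifP; case: ifP. Qed.

Section Mx2Ring.
Variable R : pzRingType.
Implicit Types a b c d k : R.

Lemma mul_mx2 a b c d a' b' c' d' :
  mx2 a b c d *m mx2 a' b' c' d' =
  mx2 (a * a' + b * c') (a * b' + b * d') (c * a' + d * c') (c * b' + d * d').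
Proof.
apply/matrixP => i j; rewrite !mxE big_ord_recl big_ord1 !mxE.
by case: i => [[|[|i]] i_lt] //; case: j => [[|[|j]] j_lt].
Qed.

Lemma scale_mx2 k a b c d : k *: mx2 a b c d = mx2 (k * a) (k * b) (k * c) (k * d).
Proof. by apply/matrixP => i j; rewrite !mxE; case: ifP; case: ifP. Qed.

Lemma mx2_1 : (1%:M : 'M[R]_2) = mx2 1 0 0 1.
Proof.
by apply/matrixP => i j; rewrite !mxE; case: i => [[|[|i]] i_lt] //; case: j => [[|[|j]] j_lt].
Qed.

Lemma mxtrace_mx2 a b c d : \tr (mx2 a b c d) = a + d.
Proof. by rewrite /mxtrace big_ord_recl big_ord1 !mxE. Qed.

End Mx2Ring.

Lemma det_mx2 (R : comPzRingType) (a b c d : R) : \det (mx2 a b c d) = a * d - b * c.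
Proof.
rewrite (expand_det_row _ ord0) big_ord_recl big_ord1 /cofactor !det_mx11 !mxE /=.
by rewrite !expr0 !mul1r expr1 mulN1r mulrN.
Qed.

Section Unimodular.
Variable R : comPzRingType.
Variables a b c e : R.
Hypothesis abce : a * e - b * c = 1.

Lemma mul_mx2_adj : mx2 a b c e *m mx2 e (- b) (- c) a = 1%:M.
Proof. by rewrite mul_mx2 mx2_1 -abce; congr mx2; ring. Qed.

Lemma mul_adj_mx2 : mx2 e (- b) (- c) a *m mx2 a b c e = 1%:M.
Proof. by rewrite mul_mx2 mx2_1 -abce; congr mx2; ring. Qed.

Lemma det_adj_mx2 : \det (mx2 e (- b) (- c) a) = 1.
Proof. by rewrite det_mx2 -abce; ring. Qed.

End Unimodular.

(** * Cusps, stabilisers and widths *)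

Definition cusp_of (a c : int) : cusp := if c == 0 then None else Some (a%:~R / c%:~R).
Definition cusp_num (x : cusp) : int := if x is Some q then numq q else 1.
Definition cusp_den (x : cusp) : int := if x is Some q then denq q else 0.

Lemma cusp_ofK x : cusp_of (cusp_num x) (cusp_den x) = x.
Proof. by case: x => [q|] //=; rewrite /cusp_of denq_eq0 /= divq_num_den. Qed.

Lemma coprimez_cusp x : coprimez (cusp_num x) (cusp_den x).
Proof. by case: x => [q|] /=; first exact: coprime_num_den. Qed.

Lemma coprimez_bezout a c : coprimez a c -> exists b e, a * e - b * c = 1.
Proof. by move/coprimezP => [[u v] /= H]; exists (- v), u; rewrite -H; ring. Qed.

Lemma coprimez_neq0 a c : coprimez a c -> a != 0 \/ c != 0.
Proof.
case: (eqVneq a 0) => [->|]; last by left.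
by rewrite /coprimez gcd0z => /eqP c1; right; apply/eqP => c0; rewrite c0 in c1.
Qed.

Lemma cusp_ofN a c : cusp_of (- a) (- c) = cusp_of a c.
Proof.
rewrite /cusp_of oppr_eq0; case: ifP => // c_neq0; congr Some.
by rewrite !intrN; field; rewrite intr_eq0 c_neq0.
Qed.

Lemma act_cusp_of (g : 'M[int]_2) a c : a != 0 \/ c != 0 ->
  act g (cusp_of a c) = cusp_of (g i0 i0 * a + g i0 i1 * c) (g i1 i0 * a + g i1 i1 * c).
Proof.
move=> ac_neq0; rewrite /act /cusp_of.
case: (eqVneq c 0) => [c0|c_neq0].
  have a_neq0 : a != 0 by case: ac_neq0; rewrite // c0 eqxx.
  rewrite c0 !mulr0 !addr0 mulf_eq0 (negbTE a_neq0) orbF intr_eq0.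
  case: (eqVneq (g i1 i0) 0) => // g10_neq0.
  by congr Some; rewrite !intrM; field; rewrite !intr_eq0 a_neq0 g10_neq0.
have cR_neq0 : (c%:~R : rat) != 0 by rewrite intr_eq0.
set X := (_ * (_ / _) + _); set Y := (_ * (_ / _) + _).
have -> : X = (g i1 i0 * a + g i1 i1 * c)%:~R / (c%:~R : rat).
  by rewrite /X intrD !intrM; field.
have -> : Y = (g i0 i0 * a + g i0 i1 * c)%:~R / (c%:~R : rat).
  by rewrite /Y intrD !intrM; field.
rewrite mulf_eq0 invr_eq0 (negbTE cR_neq0) orbF intr_eq0.
case: ifP => // den_neq0; congr Some; field.
by rewrite cR_neq0 andbT -!intrM -intrD intr_eq0 den_neq0.
Qed.

Lemma cusp_of_cross a c a' c' : a != 0 \/ c != 0 -> a' != 0 \/ c' != 0 ->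
  cusp_of a c = cusp_of a' c' -> a * c' = a' * c.
Proof.
rewrite /cusp_of => ac_neq0 ac'_neq0.
case: (eqVneq c 0) => c0; case: (eqVneq c' 0) => c'0 //.
  by rewrite c0 c'0 !mulr0.
move=> [] E; apply/eqP; rewrite -subr_eq0 -(intr_eq0 rat) intrB !intrM.
have [cR cR'] : (c%:~R : rat) != 0 /\ (c'%:~R : rat) != 0 by rewrite !intr_eq0.
have -> : (a%:~R * c'%:~R - a'%:~R * c%:~R : rat) =
          (a%:~R / c%:~R - a'%:~R / c'%:~R) * (c%:~R * c'%:~R).
  by field; rewrite cR cR'.
by rewrite E subrr mul0r.
Qed.

Lemma coprimez_cross_sign a c a' c' : coprimez a c -> coprimez a' c' -> a * c' = a' * c ->
  exists2 l : int, l = 1 \/ l = -1 & a' = l * a /\ c' = l * c.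
Proof.
move=> coac coac' E.
have /coprimezP [[u v] /= uv] := coac.
have /coprimezP [[u' v'] /= uv'] := coac'.
set l := u * a' + v * c'; set m := u' * a + v' * c.
have a'E : a' = l * a by apply: (eq_lincomb2 (k1 := - v) (k2 := - a') E uv); rewrite /l; ring.
have c'E : c' = l * c by apply: (eq_lincomb2 (k1 := u) (k2 := - c') E uv); rewrite /l; ring.
have aE : a = m * a' by apply: (eq_lincomb2 (k1 := v') (k2 := - a) E uv'); rewrite /m; ring.
have cE : c = m * c' by apply: (eq_lincomb2 (k1 := - u') (k2 := - c) E uv'); rewrite /m; ring.
have ml1 : m * l = 1.
  case: (coprimez_neq0 coac) => nz; apply: (mulIf nz); rewrite mul1r -mulrA.
    by rewrite -a'E -aE.
  by rewrite -c'E -cE.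
exists l => //.
have /eqP : (`|m| * `|l|)%N = 1%N by rewrite -abszM ml1.
by rewrite muln_eq1 => /andP[_ /eqP]; lia.
Qed.

Lemma coprimez_unimodular p q r s a c : p * s - q * r = 1 -> coprimez a c ->
  coprimez (p * a + q * c) (r * a + s * c).
Proof.
move=> pqrs /coprimezP [[u v] /= uv].
apply/coprimezP; exists (u * s - v * r, - (u * q) + v * p) => /=.
by apply: (eq_lincomb2 (k1 := u * a + v * c) (k2 := 1) pqrs uv); ring.
Qed.

Lemma act_cusp_ofP (g : 'M[int]_2) a c a' c' : \det g = 1 ->
  coprimez a c -> coprimez a' c' -> act g (cusp_of a c) = cusp_of a' c' ->
  exists2 l : int, l = 1 \/ l = -1 &
    g i0 i0 * a + g i0 i1 * c = l * a' /\ g i1 i0 * a + g i1 i1 * c = l * c'.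
Proof.
move=> detg coac coac'.
have coimg : coprimez (g i0 i0 * a + g i0 i1 * c) (g i1 i0 * a + g i1 i1 * c).
  by apply: coprimez_unimodular => //; rewrite -detg [in RHS](mx2_eta g) det_mx2.
rewrite act_cusp_of; last exact: coprimez_neq0.
move=> /cusp_of_cross.
move=> /(_ (coprimez_neq0 coimg) (coprimez_neq0 coac')) /esym E.
exact: coprimez_cross_sign coac' coimg E.
Qed.

Definition stab_mx (l t a c : int) : 'M[int]_2 :=
  mx2 (l - t * (a * c)) (t * (a * a)) (- (t * (c * c))) (l + t * (a * c)).

Lemma stab_mx_conj a b c e l t : a * e - b * c = 1 ->
  mx2 a b c e *m mx2 l t 0 l *m mx2 e (- b) (- c) a = stab_mx l t a c.
Proof.
move=> abce; rewrite /stab_mx !mul_mx2; congr mx2.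
- by apply: (eq_lincomb1 (k := l) abce); ring.
- by ring.
- by ring.
- by apply: (eq_lincomb1 (k := l) abce); ring.
Qed.

Lemma stab_mx_conjV a b c e l t : a * e - b * c = 1 ->
  mx2 e (- b) (- c) a *m stab_mx l t a c *m mx2 a b c e = mx2 l t 0 l.
Proof.
move=> abce; rewrite -(stab_mx_conj l t abce) !mulmxA mul_adj_mx2 // mul1mx.
by rewrite -mulmxA mul_adj_mx2 // mulmx1.
Qed.

Lemma stab_mx_stab N l t a c : coprimez a c -> l = 1 \/ l = -1 ->
  (N%:Z %| t * (c * c))%Z -> stab N (cusp_of a c) (stab_mx l t a c).
Proof.
move=> coac l_sign Nt; split; first split.
- by rewrite det_mx2; case: l_sign => ->; ring.
- by rewrite mx2_10 rpredN.
rewrite act_cusp_of; last exact: coprimez_neq0.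
rewrite !mx2_00 !mx2_01 !mx2_10 !mx2_11.
have -> : (l - t * (a * c)) * a + t * (a * a) * c = l * a by ring.
have -> : - (t * (c * c)) * a + (l + t * (a * c)) * c = l * c by ring.
by case: l_sign => ->; rewrite ?mul1r // !mulN1r cusp_ofN.
Qed.

Lemma stab_mxP N g a c : coprimez a c -> stab N (cusp_of a c) g ->
  exists l t, [/\ l = 1 \/ l = -1, (N%:Z %| t * (c * c))%Z & g = stab_mx l t a c].
Proof.
move=> coac [[detg Ng] gx].
have [b [e abce]] := coprimez_bezout coac.
have [l l_sign [img_a img_c]] := act_cusp_ofP detg coac coac gx.
set K := mx2 e (- b) (- c) a *m g *m mx2 a b c e.
have K00 : K i0 i0 = l.
  rewrite /K [g]mx2_eta !mul_mx2 mx2_00.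
  have -> : (e * g i0 i0 + - b * g i1 i0) * a + (e * g i0 i1 + - b * g i1 i1) * c
          = e * (g i0 i0 * a + g i0 i1 * c) - b * (g i1 i0 * a + g i1 i1 * c) by ring.
  by rewrite img_a img_c -[RHS]mulr1 -abce; ring.
have K10 : K i1 i0 = 0.
  rewrite /K [g]mx2_eta !mul_mx2 mx2_10.
  have -> : (- c * g i0 i0 + a * g i1 i0) * a + (- c * g i0 i1 + a * g i1 i1) * c
          = - c * (g i0 i0 * a + g i0 i1 * c) + a * (g i1 i0 * a + g i1 i1 * c) by ring.
  by rewrite img_a img_c; ring.
have K11 : K i1 i1 = l.
  have : \det K = 1 by rewrite /K !det_mulmx det_adj_mx2 // detg det_mx2 abce !mul1r.
  rewrite [K in \det K]mx2_eta det_mx2 K00 K10 mulr0 subr0.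
  by case: l_sign => ->; lia.
have gK : g = stab_mx l (K i0 i1) a c.
  rewrite -(stab_mx_conj _ _ abce).
  have -> : mx2 l (K i0 i1) 0 l = K by rewrite [RHS]mx2_eta K00 K10 K11.
  by rewrite !mulmxA mul_mx2_adj // mul1mx -mulmxA mul_mx2_adj // mulmx1.
exists l, (K i0 i1); split => //.
by move: Ng; rewrite gK mx2_10 rpredN.
Qed.

Definition den_gcd (N : nat) (c : int) : nat := gcdn `|c| N.
Definition gcd_compl (N f : nat) : nat := gcdn f (N %/ f).
Definition width (N : nat) (c : int) : nat := N %/ den_gcd N c %/ gcd_compl N (den_gcd N c).

Section Width.
Variables (N : nat) (c : int).
Hypothesis N_gt0 : (0 < N)%N.
Local Notation d := (den_gcd N c).
Local Notation g := (gcd_compl N (den_gcd N c)).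
Local Notation w := (width N c).

Lemma den_gcd_decomp : exists C1 d',
  [/\ `|c|%N = (d * C1)%N, N = (d * (g * w))%N, d = (g * d')%N,
      coprime C1 (g * w) & coprime d' w] /\ [/\ (0 < d)%N, (0 < g)%N & (0 < w)%N].
Proof.
have coprime_div (k m n : nat) : (0 < k)%N -> gcdn (k * m) (k * n) = k -> coprime m n.
  by move=> k_gt0; rewrite -muln_gcdr -{2}[k]muln1 => /eqP; rewrite eqn_pmul2l.
have d_gt0 : (0 < d)%N by rewrite gcdn_gt0 N_gt0 orbT.
have Nd : N = (d * (N %/ d))%N by rewrite mulnC divnK ?dvdn_gcdr.
have cd : `|c|%N = (d * (`|c| %/ d))%N by rewrite mulnC divnK ?dvdn_gcdl.
have Nd_gt0 : (0 < N %/ d)%N by rewrite divn_gt0 // dvdn_leq ?dvdn_gcdr.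
have g_gt0 : (0 < g)%N by rewrite gcdn_gt0 d_gt0.
have Ndg : (N %/ d)%N = (g * w)%N by rewrite mulnC divnK ?dvdn_gcdr.
have dg : d = (g * (d %/ g))%N by rewrite mulnC divnK ?dvdn_gcdl.
exists (`|c| %/ d)%N, (d %/ g)%N; split; split => //.
- by rewrite -Ndg.
- by rewrite -Ndg; apply: (coprime_div d) => //; rewrite -cd -Nd.
- by apply: (coprime_div g) => //; rewrite -dg -Ndg.
- by move: Nd_gt0; rewrite Ndg muln_gt0 => /andP[].
Qed.

Lemma width_gt0 : (0 < w)%N.
Proof. by have [C1 [d' [_ []]]] := den_gcd_decomp. Qed.

Lemma divzK_den_gcd : c = (c %/ d%:Z)%Z * d%:Z.
Proof. by rewrite divzK // dvdzE /= dvdn_gcdl. Qed.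

Lemma dvdz_width t : (N%:Z %| t * (c * c))%Z = (w%:Z %| t)%Z.
Proof.
have [C1 [d' [[cE NE dE coC1 cod'] [d_gt0 g_gt0 _]]]] := den_gcd_decomp.
rewrite !dvdzE !abszM /= cE; move: NE dE coC1 cod' d_gt0 g_gt0.
move: g => G; move: w => W; move: d => D NE dE coC1 cod' D_gt0 G_gt0.
have -> : (`|t| * (D * C1 * (D * C1)))%N = (D * (G * (`|t| * d' * (C1 * C1))))%N.
  by rewrite {2}dE; ring.
rewrite NE !dvdn_pmul2l //.
have coC1W : coprime W (C1 * C1).
  by rewrite coprime_sym coprimeMl; move: coC1; rewrite coprimeMr => /andP[_ ->].
by rewrite !Gauss_dvdl // coprime_sym.
Qed.

Lemma den_gcd_width_sq : (N %| (d * w) * (d * w))%N.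
Proof.
have [C1 [d' [[_ NE dE _ _] _]]] := den_gcd_decomp.
apply/dvdnP; exists (d' * w)%N; move: NE dE; move: g => G; move: w => W; move: d => D NE dE.
by rewrite NE dE; ring.
Qed.

Lemma coprimez_cusp_residue a : coprimez a c -> coprimez (a * (c %/ d%:Z)%Z) g%:Z.
Proof.
have [C1 [d' [[cE _ _ coC1 _] [d_gt0 _ _]]]] := den_gcd_decomp.
move=> coac; rewrite coprimezMl; apply/andP; split.
  move: coac; rewrite /coprimez /gcdz /= => coac.
  by apply: coprime_dvdr coac; rewrite cE dvdn_mulr ?dvdn_gcdl.
rewrite /coprimez /gcdz /=.
have -> : `|(c %/ d%:Z)%Z|%N = C1.
  have /= cdE : (`|(c %/ d%:Z)%Z| * `|d%:Z|)%N = `|c|%N by rewrite -abszM -divzK_den_gcd.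
  by apply/eqP; rewrite -(eqn_pmul2l d_gt0) -cE -cdE mulnC.
by move: coC1; rewrite coprimeMr => /andP[].
Qed.

Lemma gcdz_den_width : gcdz c (g * w)%N%:Z = g%:Z.
Proof.
have [C1 [d' [[cE _ dE coC1 cod'] _]]] := den_gcd_decomp.
rewrite /gcdz /= cE; move: dE coC1 cod'; move: g => G; move: w => W; move: d => D dE coC1 cod'.
rewrite dE -mulnA -muln_gcdr; suff /eqP -> : coprime (d' * C1) W by rewrite muln1.
by rewrite coprimeMl cod'; move: coC1; rewrite coprimeMr => /andP[].
Qed.

End Width.

(** * Dirichlet characters on 1 + K Z *)

Section DirichletCharacter.
Variables (M : nat) (chi : int -> algC).
Hypothesis chiM : dirichlet_char M chi.

Lemma dchar_periodic n k : chi (n + k * M%:Z) = chi n.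
Proof.
have [chiD _ _ _] := chiM.
elim/int_rec: k n => [|k IH|k IH] n.
- by rewrite mul0r addr0.
- by rewrite intS mulrDl mul1r addrCA addrC chiD IH.
- rewrite -(chiD (n + _)) -addrA.
  have -> : - (k.+1 : int) * M%:Z + M%:Z = - (k : int) * M%:Z by rewrite -addn1 PoszD; ring.
  exact: IH.
Qed.

Variable K : int.
Hypothesis MKK : (M%:Z %| K * K)%Z.

Lemma dchar_1K_add t1 t2 :
  chi (1 + K * (t1 + t2)) = chi (1 + K * t1) * chi (1 + K * t2).
Proof.
have [_ chiM' _ _] := chiM; have /dvdzP [q KKq] := MKK.
rewrite -chiM'.
have -> : (1 + K * t1) * (1 + K * t2) = 1 + K * (t1 + t2) + (t1 * t2 * q) * M%:Z.
  by rewrite -mulrA -KKq; ring.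
by rewrite dchar_periodic.
Qed.

Lemma dchar_1K_mulz t m : chi (1 + K * t) = 1 -> chi (1 + K * (m * t)) = 1.
Proof.
move=> chit; elim/int_rec: m => [|m IH|m IH].
- by rewrite mul0r mulr0 addr0; case: chiM.
- by rewrite intS mulrDl mul1r dchar_1K_add chit IH mulr1.
- move: IH; have -> : - (m : int) * t = - (m.+1 : int) * t + t by rewrite -addn1 PoszD; ring.
  by rewrite dchar_1K_add chit mulr1.
Qed.

Lemma dchar_1K_trivial U g : (M%:Z %| K * g)%Z -> coprimez U g ->
  chi (1 + K * U) = 1 -> forall t, chi (1 + K * t) = 1.
Proof.
move=> /dvdzP [q Kgq] /coprimezP [[x y] /= Uxy] chiU t.
have chig : chi (1 + K * g) = 1 by rewrite Kgq dchar_periodic; case: chiM.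
have -> : t = (t * x) * U + (t * y) * g by rewrite -[LHS]mulr1 -Uxy; ring.
by rewrite dchar_1K_add (dchar_1K_mulz _ chiU) (dchar_1K_mulz _ chig) mulr1.
Qed.

End DirichletCharacter.

Lemma primitive_char_dvd M chi K : (0 < M)%N -> primitive_char M chi ->
  (forall t, chi (1 + K * t) = 1) -> (M%:Z %| K)%Z.
Proof.
move=> M_gt0 [chiM prim] chiK; set D := gcdn `|K| M.
have DM : (D %| M)%N by rewrite dvdn_gcdr.
case: (ltnP D M) => [DltM|]; last first.
  move=> MleD; have -> : M = D by apply/eqP; rewrite eqn_leq MleD dvdn_leq.
  by rewrite dvdzE /= dvdn_gcdl.
have [n [Dn _ chin]] := prim D DM DltM.
have /dvdzP [m nm] := Dn; have [u [v uv]] := Bezoutz K M.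
have nE : n = 1 + K * (m * u) + (m * v) * M%:Z.
  have -> : n = 1 + m * D%:Z by rewrite -nm; ring.
  by rewrite -[D%:Z]/(gcdz K M) -uv; ring.
by move: chin; rewrite nE dchar_periodic // chiK eqxx.
Qed.

Lemma coprimez_1K N K U : (N%:Z %| K * K)%Z -> coprimez (1 + K * U) N%:Z.
Proof.
move=> /dvdzP [q Kq]; apply/coprimezP; exists (1 - K * U, U * U * q) => /=.
have -> : (1 - K * U) * (1 + K * U) = 1 - (K * K) * (U * U) by ring.
by rewrite Kq; ring.
Qed.

Lemma psi_width_gcd_dvd N psi Ns chi a c k : (0 < N)%N -> (Ns %| N)%N ->
  primitive_char Ns chi -> induced_by N psi Ns chi -> coprimez a c -> k = 1 \/ k = -1 ->
  psi (1 + k * (width N c)%:Z * (a * c)) = 1 -> (gcd_compl N (den_gcd N c) %| N %/ Ns)%N.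
Proof.
move=> N_gt0 NsN chi_prim psi_ind coac k_sign.
have [C1 [d' [[_ NE _ _ _] _]]] := den_gcd_decomp c N_gt0.
have cE := divzK_den_gcd N c.
have NKK := den_gcd_width_sq c N_gt0.
have co_res := coprimez_cusp_residue N_gt0 coac.
set d := den_gcd N c in cE NE NKK co_res *; set g := gcd_compl N d in NE co_res *.
set w := width N c in NE NKK *; set c1 := (c %/ d%:Z)%Z in cE co_res.
set K : int := (d * w)%N; set U := k * (a * c1).
have -> : 1 + k * w%:Z * (a * c) = 1 + K * U by rewrite [in LHS]cE /K /U PoszM; ring.
have Ns_gt0 : (0 < Ns)%N by apply: dvdn_gt0 NsN.
have NsK2 : (Ns%:Z %| K * K)%Z by apply: dvdz_trans (_ : Ns%:Z %| N%:Z)%Z _; rewrite dvdzE.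
have NsKg : (Ns%:Z %| K * g%:Z)%Z.
  by rewrite dvdzE /K -PoszM /= -mulnA [(w * g)%N]mulnC -NE.
have coUg : coprimez U g%:Z.
  by rewrite /U coprimezMl co_res andbT; case: k_sign => ->; rewrite /coprimez /gcdz /= gcd1n.
have [chiNs _] := chi_prim.
rewrite psi_ind coprimez_1K // => chiU.
have : (Ns%:Z %| K)%Z.
  exact: primitive_char_dvd Ns_gt0 chi_prim (dchar_1K_trivial chiNs NsK2 NsKg coUg chiU).
rewrite dvdzE /K /= => /dvdnP [j Kj].
by rewrite NE mulnCA Kj mulnA mulnK // dvdn_mulr.
Qed.

Lemma psi_width_of_gcd_dvd N psi Ns chi a c : (0 < N)%N -> (Ns %| N)%N ->
  dirichlet_char Ns chi -> induced_by N psi Ns chi ->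
  (gcd_compl N (den_gcd N c) %| N %/ Ns)%N -> psi (1 + (width N c)%:Z * (a * c)) = 1.
Proof.
move=> N_gt0 NsN chiNs psi_ind gNs.
have [C1 [d' [[_ NE _ _ _] [_ g_gt0 _]]]] := den_gcd_decomp c N_gt0.
have cE := divzK_den_gcd N c.
have NKK := den_gcd_width_sq c N_gt0.
set d := den_gcd N c in cE NE NKK gNs g_gt0 *; set g := gcd_compl N d in NE gNs g_gt0 *.
set w := width N c in NE NKK *; set c1 := (c %/ d%:Z)%Z in cE.
have [j Kj] : exists j, (d * w)%N = (j * Ns)%N.
  have /dvdnP [m Nm] := NsN.
  have /dvdnP [j mj] : (g %| m)%N by move: gNs; rewrite Nm mulnK // (dvdn_gt0 N_gt0 NsN).
  exists j; apply/eqP; rewrite -(eqn_pmul2l g_gt0); apply/eqP.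
  by rewrite mulnCA -NE Nm mj; ring.
have -> : 1 + w%:Z * (a * c) = 1 + (d * w)%N%:Z * (a * c1) by rewrite [in LHS]cE PoszM; ring.
rewrite psi_ind coprimez_1K; last by rewrite dvdzE abszM.
have [_ _ chi1 _] := chiNs.
by rewrite Kj PoszM -chi1 -(dchar_periodic chiNs 1 (j%:Z * (a * c1))); congr chi; ring.
Qed.

(** * Scaling matrices and singular cusps *)

Lemma mxR_mx2 (a b c d : int) : mxR (mx2 a b c d) = mx2 a%:~R b%:~R c%:~R d%:~R.
Proof. exact: map_mx2. Qed.

Lemma mxR1 : mxR 1%:M = 1%:M.
Proof. by rewrite mx2_1 mxR_mx2 mx2_1. Qed.

Lemma mxRM (A B : 'M[int]_2) : mxR (A *m B) = mxR A *m mxR B.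
Proof. exact: map_mxM. Qed.

Lemma mxR_stab_mx l t a c :
  mxR (stab_mx l t a c) = (l%:~R : RR) *: 1%:M + (t%:~R : RR) *: mxR (stab_mx 0 1 a c).
Proof.
rewrite !mxR_mx2 mx2_1 !scale_mx2 add_mx2; congr mx2;
  rewrite ?intrD ?intrN ?intrM ?intrB; ring.
Qed.

Lemma SL2R_unitmx s : SL2R s -> s \in unitmx.
Proof. by rewrite unitmxE => ->; rewrite unitr1. Qed.

(* The nilpotent part of a stabiliser has trace 0, so comparing traces of the two
   conjugates with translations pins down both signs. *)
Lemma conj_stab_mx_transl (s : 'M[RR]_2) l t w n (e : bool) a c : SL2R s ->
  invmx s *m mxR (stab_mx l t a c) *m s = transl 1 ->
  invmx s *m mxR (stab_mx 1 w a c) *m s = (-1) ^+ e *: transl n ->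
  l = 1 /\ w = t * n.
Proof.
move=> /SL2R_unitmx s_unit.
have [Q conjE trQ] : exists2 Q : 'M[RR]_2,
    forall k m : RR, invmx s *m (k *: 1%:M + m *: mxR (stab_mx 0 1 a c)) *m s
                     = k *: 1%:M + m *: Q
    & \tr Q = 0.
  exists (invmx s *m mxR (stab_mx 0 1 a c) *m s).
    by move=> k m; rewrite mulmxDr mulmxDl -!scalemxAr mulmx1 -!scalemxAl mulVmx.
  rewrite mxtrace_mulC mulmxA mulmxV // mul1mx.
  by rewrite mxR_mx2 mxtrace_mx2 !intrD !intrN !intrM; ring.
move: trQ; rewrite (mxR_stab_mx l t) (mxR_stab_mx 1 w) !conjE [Q]mx2_eta mxtrace_mx2 => trQ.
rewrite mx2_1 /transl mk2E !scale_mx2 !add_mx2.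
move=> lT wT; have [l00 l01 _ l11] := mx2_inj lT; have [w00 w01 _ w11] := mx2_inj wT.
rewrite ?mulr1z ?mulr0 ?mulr1 ?addr0 ?add0r in l00 l01 l11 w00 w01 w11.
have {}trQ : forall k : RR, k * Q i0 i0 + k * Q i1 i1 = 0 by move=> k; rewrite -mulrDr trQ mulr0.
have l1 : (l%:~R : RR) = 1 by have := trQ t%:~R; lra.
have e1 : ((-1) ^+ e : RR) = 1 by have := trQ w%:~R; lra.
split; apply: (@intr_inj RR); first by rewrite l1.
rewrite intrM.
have -> : (n%:~R : RR) = w%:~R * Q i0 i1 by rewrite w01 e1 mul1r.
by rewrite mulrCA l01 mulr1.
Qed.

(* Comparing tau with the stabiliser element of parameter w gives w = t n; as w | t,
   tau is the element of parameter t = +-w. *)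
Lemma singular_psi_width N psi a c : (0 < N)%N -> coprimez a c ->
  singular N psi (cusp_of a c) ->
  exists2 k : int, k = 1 \/ k = -1 & psi (1 + k * (width N c)%:Z * (a * c)) = 1.
Proof.
move=> N_gt0 coac [s [[detS _ stab_conj _] [g [gx gE psig]]]].
have [l [t [_ Nt gl]]] := stab_mxP coac gx.
set w := width N c.
have tau_stab : stab N (cusp_of a c) (stab_mx 1 w a c).
  by apply: stab_mx_stab => //; [left | rewrite dvdz_width].
have [n [e tauE]] := stab_conj _ tau_stab.
have gT : invmx s *m mxR (stab_mx l t a c) *m s = transl 1.
  have s_unit := SL2R_unitmx detS.
  by rewrite -gl gE !mulmxA mulVmx // mul1mx -mulmxA mulVmx // mulmx1.
have [l1 wtn] := conj_stab_mx_transl detS gT tauE.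
have /dvdzP [k tk] : (w%:Z %| t)%Z by rewrite -dvdz_width.
have kn : k * n = 1.
  apply: (@mulIf _ w%:Z); first by have := width_gt0 c N_gt0; rewrite -/w; lia.
  by rewrite mul1r mulrAC -tk -wtn.
exists k.
  have /eqP : (`|k| * `|n|)%N = 1%N by rewrite -abszM kn.
  by rewrite muln_eq1 => /andP[/eqP k1 _]; lia.
by move: psig; rewrite /psi_mx gl mx2_11 l1 tk.
Qed.

Definition scaling_mx (a b c e : int) (r : RR) : 'M[RR]_2 :=
  mxR (mx2 a b c e) *m mx2 r 0 0 r^-1.

Section ScalingMatrix.
Variables (a b c e : int) (r : RR).
Hypotheses (abce : a * e - b * c = 1) (r_neq0 : r != 0).
Local Notation s := (scaling_mx a b c e r).

Lemma scaling_mx_inv : invmx s = mx2 r^-1 0 0 r *m mxR (mx2 e (- b) (- c) a).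
Proof.
have sV : s *m (mx2 r^-1 0 0 r *m mxR (mx2 e (- b) (- c) a)) = 1%:M.
  rewrite /scaling_mx mulmxA -[_ *m mx2 r^-1 _ _ _]mulmxA mul_mx2.
  have -> : mx2 (r * r^-1 + 0 * 0) (r * 0 + 0 * r) (0 * r^-1 + r^-1 * 0) (0 * 0 + r^-1 * r)
            = 1%:M by rewrite mx2_1; congr mx2; field.
  by rewrite mulmx1 -mxRM mul_mx2_adj // mxR1.
have [s_unit _] := mulmx1_unit sV.
by rewrite -[RHS]mul1mx -(mulVmx s_unit) -mulmxA sV mulmx1.
Qed.

Lemma scaling_mx_SL2R : SL2R s.
Proof.
rewrite /SL2R /scaling_mx det_mulmx /mxR det_map_mx det_mx2 abce det_mx2.
by rewrite mulr0 subr0 divff // mulr1.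
Qed.

Lemma act_inf_R_scaling_mx : act_inf_R s = cuspR (cusp_of a c).
Proof.
rewrite /act_inf_R /scaling_mx mxR_mx2 mul_mx2 mx2_10 mx2_00 !mulr0 !addr0 /cusp_of.
have [->|c_neq0] := eqVneq c 0; first by rewrite mulr0z mul0r eqxx.
rewrite mulf_eq0 intr_eq0 (negbTE c_neq0) (negbTE r_neq0) /=; congr Some.
by rewrite fmorph_div !rmorph_int; field; rewrite intr_eq0 c_neq0 r_neq0.
Qed.

Lemma scaling_mx_conj l t :
  invmx s *m mxR (stab_mx l t a c) *m s = mx2 l%:~R (t%:~R / (r * r)) 0 l%:~R.
Proof.
rewrite scaling_mx_inv /scaling_mx.
have -> : mx2 r^-1 0 0 r *m mxR (mx2 e (- b) (- c) a) *m mxR (stab_mx l t a c) *m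
          (mxR (mx2 a b c e) *m mx2 r 0 0 r^-1)
        = mx2 r^-1 0 0 r *m mxR (mx2 e (- b) (- c) a *m stab_mx l t a c *m mx2 a b c e)
            *m mx2 r 0 0 r^-1 by rewrite !mxRM !mulmxA.
by rewrite stab_mx_conjV // mxR_mx2 !mul_mx2; congr mx2; rewrite ?mulr0z; field.
Qed.

Lemma scaling_mx_transl (w : nat) : r * r = w%:~R ->
  s *m transl 1 *m invmx s = mxR (stab_mx 1 w a c).
Proof.
move=> rrw; rewrite scaling_mx_inv /scaling_mx -(stab_mx_conj _ _ abce).
have DTD : mx2 r 0 0 r^-1 *m transl 1 *m mx2 r^-1 0 0 r = mxR (mx2 1 w%:Z 0 1).
  by rewrite /transl mk2E mxR_mx2 !mul_mx2 -rrw; congr mx2; rewrite ?mulr0z ?mulr1z; field.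
by rewrite !mxRM -DTD !mulmxA.
Qed.

Lemma scaling_mx_scaling N : (0 < N)%N -> coprimez a c -> r * r = (width N c)%:~R ->
  scaling N (cusp_of a c) s.
Proof.
move=> N_gt0 coac rrw; split.
- exact: scaling_mx_SL2R.
- exact: act_inf_R_scaling_mx.
- move=> g /(stab_mxP coac) [l [t [l_sign]]].
  rewrite dvdz_width // => /dvdzP [n ->] ->.
  exists (l * n), (l == -1).
  rewrite scaling_mx_conj intrM -rrw mulfK ?mulf_neq0 // /transl mk2E scale_mx2.
  by case: l_sign => -> /=; congr mx2; rewrite ?intrM; ring.
- move=> n ε; set sg : int := (-1) ^+ ε.
  have sg_sign : sg = 1 \/ sg = -1 by rewrite /sg; case: (ε); [right | left].
  have Nt : (N%:Z %| sg * n * (width N c)%:Z * (c * c))%Z by rewrite dvdz_width // dvdz_mull.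
  exists (stab_mx sg (sg * n * (width N c)%:Z) a c); split; first exact: stab_mx_stab.
  rewrite scaling_mx_conj intrM -rrw mulfK ?mulf_neq0 // /transl mk2E scale_mx2.
  have -> : ((-1) ^+ ε : RR) = sg%:~R by rewrite /sg rmorphXn rmorphN1.
  by congr mx2; rewrite ?mulr0 ?mulr1 ?intrM.
Qed.

End ScalingMatrix.

Lemma singular_of_psi_width N psi a c : (0 < N)%N -> coprimez a c ->
  psi (1 + (width N c)%:Z * (a * c)) = 1 -> singular N psi (cusp_of a c).
Proof.
move=> N_gt0 coac psi1.
have [b [e abce]] := coprimez_bezout coac.
set w := width N c; set r : RR := Num.sqrt w%:~R.
have rrw : r * r = w%:~R by rewrite -expr2 sqr_sqrtr ?ler0z.
have r_neq0 : r != 0.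
  apply/eqP => r0; move: rrw; rewrite r0 mulr0 => /eqP; rewrite eq_sym intr_eq0.
  by have := width_gt0 c N_gt0; rewrite -/w; lia.
exists (scaling_mx a b c e r); split; first exact: scaling_mx_scaling.
exists (stab_mx 1 w a c); split; last by rewrite /psi_mx mx2_11.
- by apply: stab_mx_stab => //; [left | rewrite dvdz_width].
- by rewrite (scaling_mx_transl abce r_neq0 rrw).
Qed.

Lemma singular_cusp_ofP N psi Ns chi a c : (0 < N)%N -> (Ns %| N)%N ->
  primitive_char Ns chi -> induced_by N psi Ns chi -> coprimez a c ->
  singular N psi (cusp_of a c) <-> (gcd_compl N (den_gcd N c) %| N %/ Ns)%N.
Proof.
move=> N_gt0 NsN chi_prim psi_ind coac; split.
  move/(singular_psi_width N_gt0 coac) => [k k_sign].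
  exact: psi_width_gcd_dvd N_gt0 NsN chi_prim psi_ind coac k_sign.
move=> gNs; apply: singular_of_psi_width => //.
by apply: psi_width_of_gcd_dvd gNs => //; case: chi_prim.
Qed.

(** * Classes of cusps *)

Definition cusp_residue (N : nat) (a c : int) : nat :=
  `|((a * (c %/ (den_gcd N c)%:Z)%Z) %% (gcd_compl N (den_gcd N c))%:Z)%Z|%N.

Definition cusp_class (N : nat) (x : cusp) : nat * nat :=
  (den_gcd N (cusp_den x), cusp_residue N (cusp_num x) (cusp_den x)).

Lemma cusp_residueE N a c : (0 < N)%N ->
  (cusp_residue N a c)%:Z = ((a * (c %/ (den_gcd N c)%:Z)%Z) %% (gcd_compl N (den_gcd N c))%:Z)%Z.
Proof.
move=> N_gt0; have [C1 [d' [_ [_ g_gt0 _]]]] := den_gcd_decomp c N_gt0.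
by rewrite gez0_abs // modz_ge0 //; apply/eqP; lia.
Qed.

Lemma cusp_residue_bounds N a c : (0 < N)%N -> coprimez a c ->
  (cusp_residue N a c < gcd_compl N (den_gcd N c))%N /\
  coprime (cusp_residue N a c) (gcd_compl N (den_gcd N c)).
Proof.
move=> N_gt0 coac; have [C1 [d' [_ [_ g_gt0 _]]]] := den_gcd_decomp c N_gt0.
split; first by rewrite -ltz_nat cusp_residueE // ltz_pmod // ltz_nat.
have := coprimez_cusp_residue N_gt0 coac.
by rewrite /coprimez -gcdz_modl -cusp_residueE.
Qed.

Lemma cusp_equiv_cusp_of N a c a' c' : coprimez a c -> coprimez a' c' ->
  cusp_equiv N (cusp_of a c) (cusp_of a' c') ->
  exists p q r s l, [/\ p * s - q * (r * N%:Z) = 1, l = 1 \/ l = -1,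
                        a' = l * (p * a + q * c) & c' = l * (r * N%:Z * a + s * c)].
Proof.
move=> coac coac' [G [[detG /dvdzP [r GrN]] Gx]].
have [l l_sign [Ga Gc]] := act_cusp_ofP detG coac coac' Gx.
have ll : l * l = 1 by case: l_sign => ->.
exists (G i0 i0), (G i0 i1), r, (G i1 i1), l; split => //.
- by rewrite -GrN -detG [in RHS](mx2_eta G) det_mx2.
- by rewrite Ga mulrA ll mul1r.
- by rewrite -GrN Gc mulrA ll mul1r.
Qed.

Section ClassInvariance.
Variables (N : nat) (a c a' c' p q r s l : int).
Hypotheses (N_gt0 : (0 < N)%N) (pqrs : p * s - q * (r * N%:Z) = 1) (l_sign : l = 1 \/ l = -1).
Hypotheses (a'E : a' = l * (p * a + q * c)) (c'E : c' = l * (r * N%:Z * a + s * c)).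

Lemma den_gcd_equiv : den_gcd N c' = den_gcd N c.
Proof.
have coNs : coprimez N%:Z s.
  by apply/coprimezP; exists (- (q * r), p) => /=; rewrite -pqrs; ring.
have : gcdz c' N%:Z = gcdz c N%:Z.
  have -> : gcdz c' N%:Z = gcdz (r * N%:Z * a + s * c) N%:Z.
    by rewrite c'E /gcdz abszM; case: l_sign => -> /=; rewrite mul1n.
  by rewrite gcdzC (mulrC r) -mulrA (mulrC N%:Z) gcdzMDl Gauss_gcdzr // gcdzC.
by case.
Qed.

Lemma cusp_residue_equiv : cusp_residue N a' c' = cusp_residue N a c.
Proof.
have [C1 [d' [[_ NE dE _ _] [d_gt0 _ _]]]] := den_gcd_decomp c N_gt0.
have cE := divzK_den_gcd N c; have c'E' := divzK_den_gcd N c'.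
rewrite /cusp_residue den_gcd_equiv in c'E' *.
set d := den_gcd N c in NE dE d_gt0 cE c'E' *; set g := gcd_compl N d in NE dE *.
set w := width N c in NE; set c1 := (c %/ d%:Z)%Z in cE *; set c1' := (c' %/ d%:Z)%Z in c'E' *.
have NZ : N%:Z = g%:Z * d'%:Z * (g%:Z * w%:Z) by rewrite NE dE !PoszM.
have dZ : d%:Z = g%:Z * d'%:Z by rewrite dE PoszM.
have c1'E : c1' = l * (r * g%:Z * w%:Z * a + s * c1).
  apply: (mulIf (_ : d%:Z != 0)); first by apply/eqP; lia.
  by rewrite -c'E' c'E cE NZ dZ; ring.
(* a' c1' = (p a + q c) (r g w a + s c1) = p s a c1 = a c1 (mod g), as g | c and
   p s = 1 (mod N). *)
congr absz; apply/eqP; rewrite eqz_mod_dvd; apply/dvdzP.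
exists ((p * a + q * c1 * d'%:Z * g%:Z) * r * w%:Z * a + q * c1 * d'%:Z * s * c1
        + a * c1 * q * r * d'%:Z * g%:Z * w%:Z).
have ll : l * l = 1 by case: l_sign => ->.
rewrite a'E c1'E cE dZ mulrACA ll mul1r.
by apply: (eq_lincomb1 (k := a * c1) pqrs); rewrite NZ; ring.
Qed.

End ClassInvariance.

Lemma cusp_class_equiv N x y : (0 < N)%N -> cusp_equiv N x y -> cusp_class N x = cusp_class N y.
Proof.
move=> N_gt0; rewrite -[x in cusp_equiv _ x]cusp_ofK -[y in cusp_equiv _ _ y]cusp_ofK.
move=> /(cusp_equiv_cusp_of (coprimez_cusp x) (coprimez_cusp y)).
move=> [p [q [r [s [l [pqrs l_sign a'E c'E]]]]]].
rewrite /cusp_class (den_gcd_equiv pqrs l_sign c'E).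
by rewrite (cusp_residue_equiv N_gt0 pqrs l_sign a'E c'E).
Qed.

Definition coprime_shift (u f : nat) : nat := (\prod_(p <- primes f | ~~ (p %| u)) p)%N.

Lemma coprime_add_shift u g f : coprime u g -> (0 < f)%N ->
  coprime (u + coprime_shift u f * g) f.
Proof.
move=> co_ug f_gt0; rewrite /coprime.
have [gcd_le1|gcd_gt1] := leqP (gcdn (u + coprime_shift u f * g) f) 1.
  by rewrite eqn_leq gcd_le1 gcdn_gt0 f_gt0 orbT.
have p_prime := pdiv_prime gcd_gt1; set p := pdiv _ in p_prime.
have p_sum : (p %| u + coprime_shift u f * g)%N by apply: dvdn_trans (pdiv_dvd _) (dvdn_gcdl _ _).
have p_f : (p %| f)%N by apply: dvdn_trans (pdiv_dvd _) (dvdn_gcdr _ _).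
have p_shift : (p %| coprime_shift u f)%N = ~~ (p %| u)%N.
  rewrite Euclid_dvd_prod // big_has_cond; apply/hasP/idP.
    move=> [q]; rewrite mem_primes => /and3P[q_prime _ _] /andP[q_u].
    by rewrite dvdn_prime2 // => /eqP ->.
  by move=> p_u; exists p; rewrite ?mem_primes ?p_prime ?f_gt0 ?p_f //= p_u dvdnn.
case p_u : (p %| u)%N; move: p_sum.
  rewrite dvdn_addr // Euclid_dvdM // p_shift p_u /= => p_g.
  have : (p %| gcdn u g)%N by rewrite dvdn_gcd p_u.
  by rewrite (eqP co_ug) dvdn1 => /eqP p1; move: (prime_gt1 p_prime); rewrite p1.
have p_shift_g : (p %| coprime_shift u f * g)%N by rewrite dvdn_mulr // p_shift p_u.
by rewrite dvdn_addl // p_u.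
Qed.

Definition rep_num (N f u : nat) : nat := (u + coprime_shift u f * gcd_compl N f)%N.
Definition cusp_rep (N f u : nat) : cusp := cusp_of (rep_num N f u)%:Z f%:Z.

Section Representative.
Variables N f u : nat.
Hypotheses (N_gt0 : (0 < N)%N) (fN : (f %| N)%N) (co_u : coprime u (gcd_compl N f)).

Let f_gt0 : (0 < f)%N. Proof. exact: dvdn_gt0 N_gt0 fN. Qed.

Lemma coprimez_rep_num : coprimez (rep_num N f u) f.
Proof. exact: coprime_add_shift. Qed.

Lemma den_gcd_dvdn : den_gcd N f = f.
Proof. exact/gcdn_idPl. Qed.

Lemma cusp_rep_num_den :
  cusp_num (cusp_rep N f u) = rep_num N f u /\ cusp_den (cusp_rep N f u) = f.
Proof.
have co : coprime `|(rep_num N f u)%:Z| `|f%:Z| by exact: coprimez_rep_num.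
have f_neq0 : (f%:Z == 0) = false by apply/negbTE; rewrite -lt0n f_gt0.
rewrite /cusp_rep /cusp_of f_neq0 /= coprimeq_num ?coprimeq_den ?f_neq0 //.
by rewrite gtr0_sg ?mul1r // ltz_nat.
Qed.

Lemma cusp_class_rep : (u < gcd_compl N f)%N -> cusp_class N (cusp_rep N f u) = (f, u).
Proof.
move=> u_lt; rewrite /cusp_class /cusp_residue; have [-> ->] := cusp_rep_num_den.
have f_neq0 : (f%:Z == 0) = false by apply/negbTE; rewrite -lt0n f_gt0.
rewrite den_gcd_dvdn divzz f_neq0.
by rewrite mulr1 /rep_num PoszD PoszM addrC modzMDl modz_small.
Qed.

End Representative.

(* The witness is [a' b'; c' e'] [1 k; 0 1] [a b; c e]^-1, which maps a/c to a'/c'. *)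
Lemma cusp_equiv_lowerleft N a b c e a' b' c' e' k :
  a * e - b * c = 1 -> a' * e' - b' * c' = 1 ->
  (N%:Z %| c' * e - (c' * k + e') * c)%Z -> cusp_equiv N (cusp_of a c) (cusp_of a' c').
Proof.
move=> abce abce' Nk.
have coac : coprimez a c by apply/coprimezP; exists (e, - b); rewrite -abce /=; ring.
set G := mx2 a' b' c' e' *m mx2 1 k 0 1 *m mx2 e (- b) (- c) a.
exists G; split; first split.
- by rewrite !det_mulmx det_adj_mx2 // !det_mx2 abce'; ring.
- suff -> : G i1 i0 = c' * e - (c' * k + e') * c by [].
  by rewrite /G !mul_mx2 mx2_10; ring.
rewrite act_cusp_of; last exact: coprimez_neq0.
rewrite /G !mul_mx2 !mx2_00 !mx2_01 !mx2_10 !mx2_11; congr cusp_of.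
- by apply: (eq_lincomb1 (k := a') abce); ring.
- by apply: (eq_lincomb1 (k := c') abce); ring.
Qed.

(* Bezout between c and N/d provides k, once e = e0 (c/d) mod g is known. *)
Lemma cusp_equiv_rep N a c : (0 < N)%N -> coprimez a c ->
  cusp_equiv N (cusp_of a c) (cusp_rep N (den_gcd N c) (cusp_residue N a c)).
Proof.
move=> N_gt0 coac; have [b [e abce]] := coprimez_bezout coac.
have [_ co_u] := cusp_residue_bounds N_gt0 coac.
have [C1 [d' [[_ NE dE _ _] _]]] := den_gcd_decomp c N_gt0.
have cE := divzK_den_gcd N c; have uE := cusp_residueE a c N_gt0.
have co_res := coprimez_cusp_residue N_gt0 coac.
have [x [y xy]] := Bezoutz c (gcd_compl N (den_gcd N c) * width N c)%N.
rewrite gcdz_den_width // in xy.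
set d := den_gcd N c in NE dE cE uE co_res co_u xy *.
set g := gcd_compl N d in NE dE uE co_res co_u xy *.
set w := width N c in NE xy; set c1 := (c %/ d%:Z)%Z in cE uE co_res.
set u := cusp_residue N a c in uE co_u *.
have [b0 [e0 Ae]] := coprimez_bezout (coprimez_rep_num N_gt0 (dvdn_gcdr _ _) co_u).
set A := rep_num N d u in Ae *.
have /dvdzP [m mE] : (g%:Z %| e - e0 * c1)%Z.
  have coga : coprimez g%:Z a.
    by rewrite coprimez_sym; move: co_res; rewrite coprimezMl => /andP[].
  rewrite -(Gauss_dvdzr _ coga).
  have [q ac1E] : exists q, a * c1 = q * g%:Z + u%:Z.
    by rewrite uE; exists ((a * c1) %/ g%:Z)%Z; exact: divz_eq.
  have AE : A%:Z = u%:Z + (coprime_shift u d)%:Z * g%:Z by rewrite /A /rep_num PoszD PoszM.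
  have dZ : d%:Z = g%:Z * d'%:Z by rewrite dE PoszM.
  rewrite cE dZ in abce; rewrite dZ AE in Ae.
  apply/dvdzP; exists (b * c1 * d'%:Z - b0 * d'%:Z + (coprime_shift u d)%:Z * e0 - q * e0).
  by apply: (eq_lincomb3 (k1 := 1) (k2 := -1) (k3 := - e0) abce Ae ac1E); ring.
apply: (@cusp_equiv_lowerleft N a b c e A b0 d e0 (x * m) abce Ae).
apply/dvdzP; exists (y * m); rewrite NE PoszM.
by apply: (eq_lincomb3 (k1 := - (d%:Z * m)) (k2 := d%:Z) (k3 := - e0) xy mE cE); ring.
Qed.

(** * Counting the singular classes *)

Definition singular_classes (N Ns : nat) : seq (nat * nat) :=
  [seq (f, u) | f <- [seq f <- iota 0 N.+1 | (f %| N) && (gcd_compl N f %| N %/ Ns)]%N,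
                u <- [seq u <- iota 0 (gcd_compl N f) | coprime u (gcd_compl N f)]].

Definition singular_reps (N Ns : nat) : seq cusp :=
  [seq cusp_rep N p.1 p.2 | p <- singular_classes N Ns].

Lemma mem_singular_classes N Ns f u : (0 < N)%N ->
  ((f, u) \in singular_classes N Ns) =
  [&& f %| N, gcd_compl N f %| N %/ Ns, u < gcd_compl N f & coprime u (gcd_compl N f)]%N.
Proof.
move=> N_gt0; apply/allpairsPdep/and4P.
  move=> [f' [u' []]]; rewrite !mem_filter !mem_iota /= => /andP[/andP[fN gNs] _].
  by move=> /andP[co_u u_lt] [-> ->].
move=> [fN gNs u_lt co_u]; exists f, u; split => //.
  by rewrite mem_filter fN gNs mem_iota /= ltnS dvdn_leq.
by rewrite mem_filter co_u mem_iota.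
Qed.

Lemma uniq_singular_classes N Ns : uniq (singular_classes N Ns).
Proof.
apply: allpairs_uniq_dep => [||[f1 u1] [f2 u2] _ _ /= [f12 u12]].
- by rewrite filter_uniq // iota_uniq.
- by move=> f _; rewrite filter_uniq // iota_uniq.
by move: u1 u2 u12; rewrite f12 => u1 u2 ->.
Qed.

Lemma size_singular_classes N Ns : size (singular_classes N Ns) =
  (\sum_(f < N.+1 | (f %| N) && (gcdn f (N %/ f) %| N %/ Ns)) totient (gcdn f (N %/ f)))%N.
Proof.
rewrite size_allpairs_dep.
have size_units g : size [seq u <- iota 0 g | coprime u g] = totient g.
  rewrite size_filter totient_count_coprime -sum1_count big_mkcond /= /index_iota subn0.
  by apply: eq_bigr => i _; rewrite coprime_sym; case: (coprime g i).
rewrite (eq_map (fun f => size_units (gcd_compl N f))) sumnE big_map big_filter.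
have := big_mkord (fun f => (f %| N) && (gcd_compl N f %| N %/ Ns))%N
                  (fun f => totient (gcd_compl N f)).
by rewrite /index_iota ?subn0 => <-.
Qed.

Lemma cusp_class_singular_reps N Ns : (0 < N)%N ->
  map (cusp_class N) (singular_reps N Ns) = singular_classes N Ns.
Proof.
move=> N_gt0; rewrite -map_comp -[RHS]map_id; apply/eq_in_map => -[f u].
by rewrite mem_singular_classes // => /and4P[fN _ u_lt co_u] /=; rewrite cusp_class_rep.
Qed.


Theorem corollary5p5 (N : nat) (k : int) (psi : int -> algC) (Nstar : nat)
  (chi : int -> algC) :
  (0 < N)%N ->
  dirichlet_char N psi ->
  psi (-1) = ((-1) ^ k)%R ->
  (Nstar %| N)%N ->
  primitive_char Nstar chi ->
  induced_by N psi Nstar chi ->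
  exists s : seq cusp,
    [/\ size s = (\sum_(f < N.+1 | (f %| N) && (gcdn f (N %/ f) %| N %/ Nstar))
                    totient (gcdn f (N %/ f)))%N,
        forall x, x \in s -> singular N psi x,
        forall i j, (i < size s)%N -> (j < size s)%N -> i <> j ->
          ~ cusp_equiv N (nth None s i) (nth None s j) &
        forall x, singular N psi x -> exists2 y, y \in s & cusp_equiv N x y].
Proof.
(* psi is determined by chi through induced_by. *)
move=> N_gt0 _ _ NsN chi_prim psi_ind.
have singP := singular_cusp_ofP N_gt0 NsN chi_prim psi_ind.
exists (singular_reps N Nstar); split.
- by rewrite size_map size_singular_classes.
- move=> _ /mapP[[f u] + ->]; rewrite mem_singular_classes // => /and4P[fN gNs _ co_u].
  by rewrite /cusp_rep singP ?den_gcd_dvdn ?coprimez_rep_num.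
- move=> i j i_lt j_lt ij /(cusp_class_equiv N_gt0) /eqP.
  rewrite -!(nth_map None (0, 0)%N (cusp_class N)) // cusp_class_singular_reps //.
  have size_reps : size (singular_classes N Nstar) = size (singular_reps N Nstar).
    by rewrite size_map.
  by rewrite nth_uniq ?uniq_singular_classes ?size_reps // => /eqP.
move=> x; rewrite -(cusp_ofK x) => /(singP _ _ (coprimez_cusp x)) gNs.
exists (cusp_rep N (cusp_class N x).1 (cusp_class N x).2).
  have [u_lt co_u] := cusp_residue_bounds N_gt0 (coprimez_cusp x).
  by apply: map_f; rewrite mem_singular_classes // dvdn_gcdr gNs u_lt.
exact: cusp_equiv_rep N_gt0 (coprimez_cusp x).
Qed.
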